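(* Let $N\ge2$ and $k\ge2$ be fixed integers and $\epsilon>0$. Let the class distribution be $\pi_i=\frac{\epsilon}{(N-1)(1+\epsilon)}$ for $1\le i\le N-1$ and $\pi_N=\frac{1}{1+\epsilon}$. In one round of the large-batch model of the $k$IC batch labeling algorithm, the resulting class distribution $\boldsymbol{\pi}'$ and the single-round average query rate $R_2^{kIC}=1/(k\,P(s\in\mathcal{L}))$ satisfy, as $\epsilon\to0$, $$\pi'_N=1-k\epsilon+o(\epsilon),\qquad \pi'_i=\frac{k\epsilon}{N-1}+o(\epsilon)\ (1\le i\le N-1),\qquad R_2^{kIC}=\frac{1}{k-1}+\frac{k}{(k-1)^2}\epsilon+o(\epsilon).$$
   Context: Large-batch model of one round: each $k$IC query consists of $k$ samples with i.i.d. classes drawn from $\boldsymbol{\pi}$; an error-free oracle reveals which samples share a class; one representative of each class present is returned to the next batch and the other samples are settled. $P(s\in\mathcal{L})$ is the expected number of settled samples per query divided by $k$, i.e. $1-\frac1k\sum_{j=1}^N(1-(1-\pi_j)^k)$, and $\pi'_i=\frac{1-(1-\pi_i)^k}{N-\sum_{j}(1-\pi_j)^k}$ is the class distribution of the returned batch. *)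

From Stdlib Require Import Reals.
From Coquelicot Require Import Coquelicot.
Open Scope R_scope.

(* Class distribution of Corollary 4; classes are numbered 1..N.
   pi_N = 1/(1+eps), pi_i = eps/((N-1)(1+eps)) for 1 <= i <= N-1. *)
Definition pi_eps (N : nat) (eps : R) (i : nat) : R :=
  if Nat.eqb i N then 1 / (1 + eps) else eps / (INR (N - 1) * (1 + eps)).

Definition sum_miss (N k : nat) (p : nat -> R) : R :=
  sum_f_R0 (fun j => (1 - p (S j)) ^ k) (N - 1).

Definition settled_prob (N k : nat) (p : nat -> R) : R :=
  1 - / INR k * sum_f_R0 (fun j => 1 - (1 - p (S j)) ^ k) (N - 1).

Definition next_dist (N k : nat) (p : nat -> R) (i : nat) : R :=
  (1 - (1 - p i) ^ k) / (INR N - sum_miss N k p).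

Definition rate2 (N k : nat) (p : nat -> R) : R :=
  1 / (INR k * settled_prob N k p).

Definition eq_up_to_o_eps (f g : R -> R) : Prop :=
  filterlim (fun e => (f e - g e) / e) (at_right 0) (locally 0).

(* Both sides of each expansion are differentiable at eps = 0, and f = g + o(eps) there exactly
   when f and g agree at 0 together with their derivatives.  At eps = 0 all the mass sits on
   class N: a query then settles k - 1 of its k samples, and the denominator
   N - sum_j (1 - pi_j)^k equals 1.  To first order each small class is missed with probability
   1 - k eps/(N-1), whereas the big class is missed with probability O(eps^k) = o(eps), since
   k >= 2; differentiating the quotients gives the stated slopes. *)

From Stdlib Require Import Reals Lra Lia.
From Coquelicot Require Import Coquelicot.
Open Scope R_scope.

Lemma eq_up_to_o_eps_of_is_derive (f g : R -> R) (l : R) :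
  is_derive f 0 l -> is_derive g 0 l -> f 0 = g 0 -> eq_up_to_o_eps f g.
Proof.
  intros Hf Hg H0.
  assert (Hfg : derivable_pt_lim (fun e => f e - g e) 0 0).
  { apply is_derive_Reals. replace 0 with (l - l) at 2 by ring.
    exact (is_derive_minus f g 0 l l Hf Hg). }
  apply filterlim_locally. intros eps.
  destruct (Hfg eps (cond_pos eps)) as [d Hd].
  exists d. intros e He He_pos.
  assert (He_abs : Rabs e < d).
  { change (Rabs (e - 0) < d) in He. rewrite Rminus_0_r in He. exact He. }
  specialize (Hd e ltac:(lra) He_abs).
  rewrite Rplus_0_l, H0, Rminus_diag, !Rminus_0_r in Hd.
  change (Rabs ((f e - g e) / e - 0) < eps). now rewrite Rminus_0_r.
Qed.

Lemma sum_f_R0_const_but_last (f : nat -> R) (c : R) (n : nat) :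
  (forall j, (j < n)%nat -> f j = c) -> sum_f_R0 f n = INR n * c + f n.
Proof.
  induction n as [|n IH]; intros Hc.
  - simpl. ring.
  - rewrite tech5, IH by (intros; apply Hc; lia).
    rewrite (Hc n) by lia. rewrite S_INR. ring.
Qed.

Section OneRound.

Variables (N k : nat).
Hypotheses (HN : (2 <= N)%nat) (Hk : (2 <= k)%nat).

Let M := INR (N - 1).

Definition miss_small (e : R) : R := (1 - e / (M * (1 + e))) ^ k.
Definition miss_big (e : R) : R := (1 - 1 / (1 + e)) ^ k.

Lemma M_gt0 : 0 < M.
Proof. apply lt_0_INR, Nat.lt_add_lt_sub_r. exact HN. Qed.

Lemma k_gt1 : 1 < INR k.
Proof. apply (lt_INR 1). exact Hk. Qed.

Lemma INR_N : INR N = M + 1.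
Proof. unfold M. rewrite <- S_INR. f_equal. lia. Qed.

Lemma miss_small_at0 : miss_small 0 = 1.
Proof. unfold miss_small. rewrite Rdiv_0_l, Rminus_0_r. apply pow1. Qed.

Lemma miss_big_at0 : miss_big 0 = 0.
Proof.
  unfold miss_big. replace (1 - 1 / (1 + 0)) with 0 by field. apply pow_i. lia.
Qed.

Lemma is_derive_miss_small : is_derive miss_small 0 (- INR k / M).
Proof.
  pose proof M_gt0. unfold miss_small. auto_derive.
  - rewrite Rplus_0_r, Rmult_1_r. lra.
  - replace (1 + - (0 * / (M * (1 + 0)))) with 1 by (field; lra).
    rewrite pow1. field. lra.
Qed.

Lemma is_derive_miss_big : is_derive miss_big 0 0.
Proof.
  unfold miss_big. auto_derive.
  - lra.
  - replace (1 + - (1 * / (1 + 0))) with 0 by field.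
    rewrite pow_i by lia. ring.
Qed.

Lemma pi_eps_small (e : R) (i : nat) :
  (i < N)%nat -> pi_eps N e i = e / (M * (1 + e)).
Proof.
  intros Hi. unfold pi_eps. replace (Nat.eqb i N) with false; [reflexivity|].
  symmetry. apply Nat.eqb_neq. lia.
Qed.

Lemma pi_eps_last (e : R) : pi_eps N e N = 1 / (1 + e).
Proof. unfold pi_eps. now rewrite Nat.eqb_refl. Qed.

Lemma sum_pi_eps (F : R -> R) (e : R) :
  sum_f_R0 (fun j => F (pi_eps N e (S j))) (N - 1) =
  M * F (e / (M * (1 + e))) + F (1 / (1 + e)).
Proof.
  rewrite (sum_f_R0_const_but_last _ (F (e / (M * (1 + e))))).
  - replace (S (N - 1)) with N by lia. now rewrite pi_eps_last.
  - intros j Hj. now rewrite pi_eps_small by lia.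
Qed.

Definition miss_denom (e : R) : R := INR N - (M * miss_small e + miss_big e).

Lemma sum_miss_pi_eps (e : R) :
  INR N - sum_miss N k (pi_eps N e) = miss_denom e.
Proof. unfold sum_miss. now rewrite (sum_pi_eps (fun p => (1 - p) ^ k)). Qed.

Lemma miss_denom_at0 : miss_denom 0 = 1.
Proof. unfold miss_denom. rewrite miss_small_at0, miss_big_at0, INR_N. ring. Qed.

Lemma is_derive_miss_denom : is_derive miss_denom 0 (INR k).
Proof.
  replace (INR k) with (0 - (M * (- INR k / M) + 0))
    by (field; pose proof M_gt0; lra).
  apply (is_derive_minus (fun _ => INR N)); [exact (is_derive_const _ _)|].
  apply (is_derive_plus (fun e => M * miss_small e)).
  - apply is_derive_scal, is_derive_miss_small.
  - apply is_derive_miss_big.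
Qed.

Lemma is_derive_next_dist_last :
  is_derive (fun e => next_dist N k (pi_eps N e) N) 0 (- INR k).
Proof.
  apply (is_derive_ext (fun e => (1 - miss_big e) / miss_denom e)).
  { intros e. unfold next_dist. now rewrite sum_miss_pi_eps, pi_eps_last. }
  assert (Hnum : is_derive (fun e => 1 - miss_big e) 0 (0 - 0)).
  { apply (is_derive_minus (fun _ => 1)).
    - exact (is_derive_const _ _).
    - apply is_derive_miss_big. }
  assert (Hq := is_derive_div _ _ 0 _ _ Hnum is_derive_miss_denom
                  ltac:(rewrite miss_denom_at0; lra)).
  rewrite miss_denom_at0, miss_big_at0 in Hq.
  replace (- INR k) with (((0 - 0) * 1 - (1 - 0) * INR k) / 1 ^ 2) by field.
  exact Hq.
Qed.

Lemma next_dist_last_at0 : next_dist N k (pi_eps N 0) N = 1.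
Proof.
  unfold next_dist. rewrite sum_miss_pi_eps, pi_eps_last, miss_denom_at0.
  replace (1 - 1 / (1 + 0)) with 0 by field. rewrite pow_i by lia. field.
Qed.

Lemma is_derive_next_dist_small (i : nat) : (1 <= i <= N - 1)%nat ->
  is_derive (fun e => next_dist N k (pi_eps N e) i) 0 (INR k / M).
Proof.
  intros Hi.
  apply (is_derive_ext (fun e => (1 - miss_small e) / miss_denom e)).
  { intros e. unfold next_dist. now rewrite sum_miss_pi_eps, pi_eps_small by lia. }
  assert (Hnum : is_derive (fun e => 1 - miss_small e) 0 (0 - - INR k / M)).
  { apply (is_derive_minus (fun _ => 1)).
    - exact (is_derive_const _ _).
    - apply is_derive_miss_small. }
  assert (Hq := is_derive_div _ _ 0 _ _ Hnum is_derive_miss_denom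
                  ltac:(rewrite miss_denom_at0; lra)).
  rewrite miss_denom_at0, miss_small_at0 in Hq.
  replace (INR k / M) with (((0 - - INR k / M) * 1 - (1 - 1) * INR k) / 1 ^ 2)
    by (field; pose proof M_gt0; lra).
  exact Hq.
Qed.

Lemma next_dist_small_at0 (i : nat) : (1 <= i <= N - 1)%nat ->
  next_dist N k (pi_eps N 0) i = 0.
Proof.
  intros Hi. unfold next_dist.
  rewrite sum_miss_pi_eps, pi_eps_small by lia.
  fold (miss_small 0). rewrite miss_small_at0. field. rewrite miss_denom_at0. lra.
Qed.

Definition settled (e : R) : R :=
  1 - / INR k * (M * (1 - miss_small e) + (1 - miss_big e)).

Lemma settled_prob_pi_eps (e : R) : settled_prob N k (pi_eps N e) = settled e.
Proof. unfold settled_prob. now rewrite (sum_pi_eps (fun p => 1 - (1 - p) ^ k)). Qed.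

Lemma k_mul_settled_at0 : INR k * settled 0 = INR k - 1.
Proof.
  unfold settled. rewrite miss_small_at0, miss_big_at0. field. pose proof k_gt1. lra.
Qed.

Lemma is_derive_settled : is_derive settled 0 (-1).
Proof.
  pose proof M_gt0. pose proof k_gt1.
  replace (-1) with (0 - / INR k * (M * (0 - - INR k / M) + (0 - 0)))
    by (field; lra).
  apply (is_derive_minus (fun _ => 1)); [exact (is_derive_const _ _)|].
  apply is_derive_scal.
  apply (is_derive_plus (fun e => M * (1 - miss_small e))).
  - apply is_derive_scal.
    apply (is_derive_minus (fun _ => 1));
      [exact (is_derive_const _ _) | apply is_derive_miss_small].
  - apply (is_derive_minus (fun _ => 1));
      [exact (is_derive_const _ _) | apply is_derive_miss_big].
Qed.

Lemma is_derive_rate2 :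
  is_derive (fun e => rate2 N k (pi_eps N e)) 0 (INR k / (INR k - 1) ^ 2).
Proof.
  pose proof k_gt1.
  apply (is_derive_ext (fun e => / (INR k * settled e))).
  { intros e. unfold rate2. now rewrite settled_prob_pi_eps, Rdiv_1_l. }
  assert (Hinv := is_derive_inv _ 0 _ (is_derive_scal _ 0 (INR k) _ is_derive_settled)
                    ltac:(cbv beta; rewrite k_mul_settled_at0; lra)).
  cbv beta in Hinv. rewrite k_mul_settled_at0 in Hinv.
  replace (INR k / (INR k - 1) ^ 2) with (- (INR k * -1) / (INR k - 1) ^ 2) by (field; lra).
  exact Hinv.
Qed.

Lemma rate2_at0 : rate2 N k (pi_eps N 0) = 1 / (INR k - 1).
Proof. unfold rate2. now rewrite settled_prob_pi_eps, k_mul_settled_at0. Qed.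

End OneRound.

Theorem corollary4 (N k : nat) (HN : (2 <= N)%nat) (Hk : (2 <= k)%nat) :
  eq_up_to_o_eps (fun e => next_dist N k (pi_eps N e) N)
                 (fun e => 1 - INR k * e) /\
  (forall i : nat, (1 <= i <= N - 1)%nat ->
     eq_up_to_o_eps (fun e => next_dist N k (pi_eps N e) i)
                    (fun e => INR k * e / INR (N - 1))) /\
  eq_up_to_o_eps (fun e => rate2 N k (pi_eps N e))
                 (fun e => 1 / (INR k - 1) + INR k / (INR k - 1) ^ 2 * e).
Proof.
  pose proof (M_gt0 N HN). pose proof (k_gt1 k Hk).
  split; [|split].
  - apply (eq_up_to_o_eps_of_is_derive _ _ (- INR k)).
    + now apply is_derive_next_dist_last.
    + auto_derive; [exact I | ring].
    + rewrite next_dist_last_at0 by assumption. ring.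
  - intros i Hi. apply (eq_up_to_o_eps_of_is_derive _ _ (INR k / INR (N - 1))).
    + now apply is_derive_next_dist_small.
    + auto_derive; [lra | field; lra].
    + rewrite next_dist_small_at0 by assumption. field. lra.
  - apply (eq_up_to_o_eps_of_is_derive _ _ (INR k / (INR k - 1) ^ 2)).
    + now apply is_derive_rate2.
    + auto_derive; [exact I | field; lra].
    + rewrite rate2_at0 by assumption. ring.
Qed.
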